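(* In the model and protocol $\mathrm{OciorABA}^*$ described in the context, with $n\ge 3t+1$ and every honest node receiving an input message, if any honest node outputs a value $w$, then every honest node eventually outputs $w$.
   Context: Model: there are $n$ nodes $\mathrm{Node}_1,\dots,\mathrm{Node}_n$ in an asynchronous network (every message sent between honest nodes is eventually delivered, with arbitrary adversarial delay). An adaptive adversary may corrupt (make dishonest/Byzantine) at most $t$ nodes in total; $\mathcal F\subseteq[1:n]$ denotes the set of dishonest nodes; $n\ge 3t+1$. Primitives used as black boxes: (RBC) For each $j\in[1:n]$ there is a reliable broadcast instance $\mathrm{RBC}_j$ with leader $\mathrm{Node}_j$, satisfying: Consistency (if two honest nodes output $w',w''$ then $w'=w''$); Validity (if the leader is honest and inputs $w$, every honest node eventually outputs $w$); Totality (if one honest node outputs a value, every honest node eventually outputs a value). (ABBA) For each $j\in[1:n]$ there is a binary Byzantine agreement instance $\mathrm{ABBA}_j$ (inputs and outputs in $\{0,1\}$), satisfying: Termination (if all honest nodes provide inputs, every honest node eventually outputs a value and terminates); Consistency (if an honest node outputs $b$, every honest node eventually outputs $b$); Validity (if all honest nodes input the same $b$, every honest node eventually outputs $b$). (Erasure code) An $(n,t+1)$ erasure code over an alphabet $\Sigma$: an encoder $\mathrm{Enc}$ mapping a message $w$ to $(\mathrm{Enc}_1(w),\dots,\mathrm{Enc}_n(w))\in\Sigma^n$ and a decoder $\mathrm{Dec}$ such that for every set $K\subseteq[1:n]$ with $|K|=t+1$, $\mathrm{Dec}(\{\mathrm{Enc}_j(w)\}_{j\in K})=w$. Protocol $\mathrm{OciorABA}^*$,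 code for an honest $\mathrm{Node}_i$ with input message $w_i$: (1) Compute $(y^{(i)}_1,\dots,y^{(i)}_n)=\mathrm{Enc}(w_i)$ and input $y^{(i)}_i$ into $\mathrm{RBC}_i$ (as leader). (2) Upon delivery of a value $y^{(j)}_j$ from $\mathrm{RBC}_j$ (after step (1) has been executed), if $\mathrm{Node}_i$ has not yet given an input to $\mathrm{ABBA}_j$: set $a_i[j]=1$ if $y^{(j)}_j=y^{(i)}_j$ and $a_i[j]=0$ otherwise, and input $a_i[j]$ into $\mathrm{ABBA}_j$. (3) Upon obtaining outputs from $n-t$ of the instances $\mathrm{ABBA}_1,\dots,\mathrm{ABBA}_n$, input $0$ into every $\mathrm{ABBA}_j$ to which $\mathrm{Node}_i$ has not yet given an input. (4) Upon obtaining outputs from all $n$ ABBA instances: let $S=\{j:\mathrm{ABBA}_j\text{ output }1\}$. If $|S|<t+1$, output a default value $\bot$ and terminate. Otherwise let $K$ be the set of the $t+1$ smallest elements of $S$, wait for delivery of $y^{(j)}_j$ from $\mathrm{RBC}_j$ for all $j\in K$, output $\mathrm{Dec}(\{y^{(j)}_j\}_{j\in K})$ and terminate. *)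

(* An abstract, event-based model of executions of the
   asynchronous protocol OciorABA*.  Time is discrete (nat); "eventually"
   means "at some (finite) time".  For honest observer i and instance j:
     rbc_out  E i j = Some (d, y)  : Node_i obtains y from RBC_j at time d
     abba_in  E i j = Some (s, b)  : Node_i inputs b into ABBA_j at time s
     abba_out E i j = Some (s, b)  : Node_i obtains output b from ABBA_j at time s
     out      E i   = Some (s, v)  : Node_i outputs v (and terminates) at time s
   None means "never happens".  Byzantine nodes are unconstrained. *)
From mathcomp Require Import all_boot.
Set Implicit Arguments. Unset Strict Implicit. Unset Printing Implicit Defensive.

Record Execution (n : nat) (Sigma W : Type) := Exec {
  rbc_out  : 'I_n -> 'I_n -> option (nat * Sigma);
  abba_in  : 'I_n -> 'I_n -> option (nat * bool);
  abba_out : 'I_n -> 'I_n -> option (nat * bool);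
  out      : 'I_n -> option (nat * W)
}.

Definition happened_by {A : Type} (o : option (nat * A)) (T : nat) : bool :=
  if o is Some (s, _) then s <= T else false.

Section Model.
Variables (n t : nat) (Sigma : eqType) (W : Type).

Definition erasure_code (Enc : W -> 'I_n -> Sigma)
    (Dec : seq ('I_n * Sigma) -> W) : Prop :=
  forall (w : W) (K : {set 'I_n}), #|K| = t.+1 ->
    Dec [seq (j, Enc w j) | j <- enum K] = w.

Variable (honest : pred 'I_n) (E : Execution n Sigma W).

(* Reliable broadcast instances RBC_j (leader Node_j, honest leader input rbc_in j) *)
Definition RBC_properties (rbc_in : 'I_n -> Sigma) : Prop :=
  [/\
      (forall j i1 i2 d1 d2 y1 y2, honest i1 -> honest i2 ->
         rbc_out E i1 j = Some (d1, y1) -> rbc_out E i2 j = Some (d2, y2) ->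
         y1 = y2),
      (forall j, honest j -> forall i, honest i ->
         exists d, rbc_out E i j = Some (d, rbc_in j)) &
      (forall j i1, honest i1 -> rbc_out E i1 j <> None ->
         forall i2, honest i2 -> rbc_out E i2 j <> None)].

Definition ABBA_properties : Prop :=
  [/\
      (forall j, (forall i, honest i -> abba_in E i j <> None) ->
         forall i, honest i -> abba_out E i j <> None),
      (forall j i1 s b, honest i1 -> abba_out E i1 j = Some (s, b) ->
         forall i2, honest i2 -> exists s', abba_out E i2 j = Some (s', b)) &
      (forall j b, (forall i, honest i -> exists s, abba_in E i j = Some (s, b)) ->
         forall i, honest i -> exists s, abba_out E i j = Some (s, b))].

Definition n_abba_out (i : 'I_n) (T : nat) : nat :=
  #|[set j : 'I_n | happened_by (abba_out E i j) T]|.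

Definition S_set (i : 'I_n) : {set 'I_n} :=
  [set j : 'I_n | if abba_out E i j is Some (_, b) then b else false].

(* K = the t+1 smallest elements of S (enum of a set of ordinals is increasing) *)
Definition K_seq (S : {set 'I_n}) : seq 'I_n := take t.+1 (enum S).

Definition follows_OciorABA (Enc : W -> 'I_n -> Sigma)
    (Dec : seq ('I_n * Sigma) -> W) (bot : W)
    (rbc_in : 'I_n -> Sigma) (i : 'I_n) (wi : W) : Prop :=
  [/\
      rbc_in i = Enc wi i,
      (* steps (2)/(3), safety: every ABBA input is given by step 2 or step 3 *)
      (forall j s b, abba_in E i j = Some (s, b) ->
         (exists y, rbc_out E i j = Some (s, y) /\ b = (y == Enc wi j))
         \/ (b = false /\ n - t <= n_abba_out i s)),
      (
      (forall j d y, rbc_out E i j = Some (d, y) ->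
         exists s b, s <= d /\ abba_in E i j = Some (s, b)) /\
      (forall T, n - t <= n_abba_out i T ->
         forall j, exists s b, s <= T /\ abba_in E i j = Some (s, b))),
      (forall s v, out E i = Some (s, v) ->
         (forall j, happened_by (abba_out E i j) s) /\
         (if #|S_set i| < t.+1 then v = bot
          else exists ys : 'I_n -> Sigma,
            (forall j, j \in K_seq (S_set i) ->
               exists d, d <= s /\ rbc_out E i j = Some (d, ys j)) /\
            v = Dec [seq (j, ys j) | j <- K_seq (S_set i)])) &
      ((forall j, abba_out E i j <> None) ->
         (#|S_set i| < t.+1 \/
          forall j, j \in K_seq (S_set i) -> rbc_out E i j <> None) ->
         out E i <> None)].

End Model.

(* All honest nodes see the same ABBA outputs, hence the same set S and the
   same K.  Consistency of RBC makes the coded fragments delivered for K the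
   same at every honest node, so any two honest outputs are equal; totality of
   RBC delivers those fragments to every honest node, so every honest node
   reaches step (4) and outputs. *)
From mathcomp Require Import all_boot.

Set Implicit Arguments.
Unset Strict Implicit.
Unset Printing Implicit Defensive.

Section Agreement.
Variables (n t : nat) (Sigma : eqType) (W : Type).
Variables (Enc : W -> 'I_n -> Sigma) (Dec : seq ('I_n * Sigma) -> W) (bot : W).
Variables (honest : pred 'I_n) (rbc_in : 'I_n -> Sigma) (E : Execution n Sigma W)
  (w : 'I_n -> W).

Hypothesis rbc : RBC_properties honest E rbc_in.
Hypothesis abba : ABBA_properties honest E.
Hypothesis protocol :
  forall i, honest i -> follows_OciorABA t E Enc Dec bot rbc_in i (w i).

Lemma abba_out_agree i i' j T :
  honest i -> honest i' -> happened_by (abba_out E i j) T ->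
  exists s s' b, abba_out E i j = Some (s, b) /\ abba_out E i' j = Some (s', b).
Proof.
move=> hi hi'; rewrite /happened_by; case ho: (abba_out E i j) => [[s b]|] // _.
have [_ abba_cons _] := abba.
have [s' ho'] := abba_cons j i s b hi ho i' hi'.
by exists s, s', b.
Qed.

Lemma S_set_agree i i' T :
  honest i -> honest i' -> (forall j, happened_by (abba_out E i j) T) ->
  S_set E i' = S_set E i.
Proof.
move=> hi hi' hall; apply/setP => j; rewrite !inE.
by have [s [s' [b [-> ->]]]] := abba_out_agree hi hi' (hall j).
Qed.

Lemma out_agree i i' s s' v v' :
  honest i -> honest i' -> out E i = Some (s, v) -> out E i' = Some (s', v') ->
  v' = v.
Proof.
move=> hi hi' ho ho'.
have [_ _ _ safe _] := protocol hi; have [_ _ _ safe' _] := protocol hi'.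
have [hall hv] := safe s v ho; have [_ hv'] := safe' s' v' ho'.
move: hv hv'; rewrite (S_set_agree hi hi' hall); case: ifP => _; first by move=> -> ->.
move=> [ys [hys ->]] [ys' [hys' ->]]; congr Dec; apply/eq_in_map => j hj.
have [rbc_cons _ _] := rbc.
have [d [_ hy]] := hys j hj; have [d' [_ hy']] := hys' j hj.
by rewrite (rbc_cons j i i' d d' (ys j) (ys' j) hi hi' hy hy').
Qed.

Lemma out_total i i' s v :
  honest i -> honest i' -> out E i = Some (s, v) -> out E i' <> None.
Proof.
move=> hi hi' ho.
have [_ _ _ safe _] := protocol hi; have [_ _ _ _ live'] := protocol hi'.
have [hall hv] := safe s v ho.
apply: live' => [j | ].
  by have [? [? [? [_ ->]]]] := abba_out_agree hi hi' (hall j).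
rewrite (S_set_agree hi hi' hall); case: ltnP => hS; [by left | right].
move: hv; rewrite ltnNge hS /= => -[ys [hys _]] j hj.
have [_ _ rbc_tot] := rbc; apply: (rbc_tot j i hi _ i' hi').
by have [d [_ ->]] := hys j hj.
Qed.

End Agreement.

Theorem theorem3 (n t : nat) (Sigma : eqType) (W : Type)
    (Enc : W -> 'I_n -> Sigma) (Dec : seq ('I_n * Sigma) -> W) (bot : W)
    (F : {set 'I_n}) (w : 'I_n -> W) (rbc_in : 'I_n -> Sigma)
    (E : Execution n Sigma W) :
  3 * t + 1 <= n ->
  #|F| <= t ->
  erasure_code t Enc Dec ->
  RBC_properties (fun i => i \notin F) E rbc_in ->
  ABBA_properties (fun i => i \notin F) E ->
  (forall i, i \notin F -> follows_OciorABA t E Enc Dec bot rbc_in i (w i)) ->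
  forall (i : 'I_n) (s : nat) (v : W), i \notin F -> out E i = Some (s, v) ->
  forall i' : 'I_n, i' \notin F -> exists s', out E i' = Some (s', v).
Proof.
move=> _ _ _ rbc abba protocol i s v hi ho i' hi'.
case ho': (out E i') => [[s' v']|]; last by case: (out_total rbc abba protocol hi hi' ho).
by exists s'; rewrite (out_agree rbc abba protocol hi hi' ho ho').
Qed.
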